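(* Let $\ell$ be a positive integer. If a partial $(n,k,t)_\lambda$-system has a nondeficient $\ell$-presequencing, then it has a cyclically $\ell$-good sequencing.
   Context: For positive integers $n,k,t,\lambda$ with $n \geq k > t \geq 2$, a partial $(n,k,t)_\lambda$-system is a pair $(X,\mathcal{B})$ where $X$ is an $n$-set of vertices and $\mathcal{B}$ is a collection of $k$-subsets of $X$ (blocks) such that each $t$-subset of $X$ is contained in at most $\lambda$ blocks. An independent set is a subset of $X$ containing no block. A sequencing is a bijection $\varphi:\mathbb{Z}_n\to X$; a set $S$ is cyclically consecutive if $S=\{\varphi(i),\ldots,\varphi(i+|S|-1)\}$ for some $i\in\mathbb{Z}_n$ (addition mod $n$); the sequencing is cyclically $\ell$-good if every set of $\ell$ cyclically consecutive vertices is independent. An $\ell$-buffered set is a triple $(S,S^{L},S^{R})$ with $S^{L},S^{R}\subseteq S$ (buffers) such that: (B1) if $|S|\le \ell-2$ then $S^{L}=S^{R}=S$; (B2) if $\ell-1\le |S|\le 2\ell-2$ then $|S^{L}|=|S^{R}|=\ell-1$ and $S^{L}\cup S^{R}=S$; (B3) if $|S|\ge 2\ell-1$ then $|S^{L}|=|S^{R}|=\ell-1$ and $S^{L}\cap S^{R}=\emptyset$. It is deficient if $|S|\le \ell-2$ and nondeficient otherwise. An $\ell$-presequencing of $(X,\mathcal{B})$ is a tuple $(X_0,\ldots,X_{s-1})$ of $\ell$-buffered sets (classes) whose underlying sets partition $X$, such that (P1) each $X_i$ is independent, and (P2) for each $i\in\mathbb{Z}_s$, $X_i^{R}\cup X_{i+1}^{L}$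 is independent (indices mod $s$). It is nondeficient if every class is nondeficient. *)

From mathcomp Require Import all_boot.

Set Implicit Arguments. Unset Strict Implicit. Unset Printing Implicit Defensive.

(* A "collection" of blocks is a sequence (repetitions allowed). *)

Definition partial_system (X : finType) (n k t lam : nat) (B : seq {set X}) : Prop :=
  [/\ #|X| = n, k <= n, t < k, 2 <= t & 0 < lam] /\
  (forall b, b \in B -> #|b| = k) /\
  (forall T : {set X}, #|T| = t -> count (fun b : {set X} => T \subset b) B <= lam).

Definition independent (X : finType) (B : seq {set X}) (S : {set X}) : Prop :=
  forall b, b \in B -> ~~ (b \subset S).

(* S is cyclically consecutive w.r.t. the sequencing phi : Z_n -> X;
   i + j (mod n) is computed as j iterations of the cyclic successor ordS. *)
Definition cyc_consecutive (X : finType) (n : nat) (phi : 'I_n -> X) (S : {set X}) : Prop :=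
  exists i : 'I_n, S = [set phi (iter j (@ordS n) i) | j : 'I_#|S|].

Definition cyclically_good (X : finType) (B : seq {set X}) (n l : nat) (phi : 'I_n -> X) : Prop :=
  forall S : {set X}, #|S| = l -> cyc_consecutive phi S -> independent B S.

(* l-buffered set (S, SL, SR); the conditions |S| <= l-2 etc. are written
   without truncated subtraction. *)
Definition buffered (X : finType) (l : nat) (S SL SR : {set X}) : Prop :=
  [/\ SL \subset S, SR \subset S,
      (#|S| + 2 <= l -> SL = S /\ SR = S),
      (l <= #|S| + 1 -> #|S| + 2 <= 2 * l ->
         [/\ #|SL| + 1 = l, #|SR| + 1 = l & SL :|: SR = S]) &
      (2 * l <= #|S| + 1 ->
         [/\ #|SL| + 1 = l, #|SR| + 1 = l & [disjoint SL & SR]])].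

Definition nondeficient (X : finType) (l : nat) (S : {set X}) : Prop :=
  ~ (#|S| + 2 <= l).

Definition presequencing (X : finType) (B : seq {set X}) (l s : nat)
  (S SL SR : 'I_s -> {set X}) : Prop :=
  [/\ (forall i, buffered l (S i) (SL i) (SR i)),
      (forall i j, i != j -> [disjoint S i & S j]),
      \bigcup_(i < s) S i = [set: X],
      (forall i, independent B (S i)) &
      (forall i, independent B (SR i :|: SL (ordS i)))].

Definition has_nondeficient_presequencing (X : finType) (B : seq {set X}) (l : nat) : Prop :=
  exists s (S SL SR : 'I_s -> {set X}),
    presequencing B l S SL SR /\ forall i, nondeficient l (S i).

(** In a nondeficient class both buffers have exactly l-1
   vertices, and they either cover the class or are disjoint.  Hence the class
   can be listed as (SL \ SR, S \ (SL u SR), SL n SR, SR \ SL) so that its first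
   l-1 vertices form SL and its last l-1 vertices form SR.  Concatenate these
   lists cyclically.  As every class has at least l-1 vertices, l cyclically
   consecutive vertices either stay inside one class, which is independent by
   (P1), or consist of a final segment of class i (inside its right buffer)
   followed by an initial segment of class i+1 (inside its left buffer), which
   is independent by (P2). *)

From mathcomp Require Import all_boot zify.

Set Implicit Arguments. Unset Strict Implicit. Unset Printing Implicit Defensive.

Lemma mem_nth_cat_drop_take (T : eqType) x0 (s1 s2 : seq T) d e c :
  d <= c -> c < size s1 + minn e (size s2) ->
  nth x0 (s1 ++ s2) c \in drop d s1 ++ take e s2.
Proof.
move=> le_dc ltc; rewrite nth_cat mem_cat; case: ltnP => [in1|in2].
  by rewrite -(subnKC le_dc) -nth_drop mem_nth // size_drop; lia.
by rewrite -(@nth_take e) ?mem_nth ?orbT ?size_take_min; lia.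
Qed.

Lemma flatten_uniq (T : eqType) (ss : seq (seq T)) :
  all uniq ss -> pairwise (fun s1 s2 => ~~ has (mem s2) s1) ss ->
  uniq (flatten ss).
Proof.
elim: ss => //= s ss IHss /andP[s_uniq ss_uniq] /andP[s_disj ss_disj].
rewrite cat_uniq s_uniq IHss // andbT.
apply/hasPn => x /flattenP[s' s'_in xs']; apply/negP => xs.
by have /hasPn/(_ x xs)/negP := allP s_disj s' s'_in.
Qed.

Section CyclicFlatten.
Variables (T : eqType) (x0 : T) (ss : seq (seq T)).
Local Notation L := (flatten ss).
Local Notation N := (size (flatten ss)).
Local Notation sh := (shape ss).
Local Notation block r := (nth [::] ss r).
Local Notation next r := (r.+1 %% size ss).

Lemma nth_flatten_index r c : c < size (block r) ->
  nth x0 L (flatten_index sh r c) = nth x0 (block r) c.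
Proof.
by move=> ltc; rewrite nth_flatten flatten_indexKl ?flatten_indexKr ?nth_shape.
Qed.

Lemma flatten_index_ltn r c : c < size (block r) -> flatten_index sh r c < N.
Proof. by rewrite size_flatten -nth_shape; exact: flatten_indexP. Qed.

Lemma flatten_index_next r c : r < size ss ->
  flatten_index sh r (size (block r) + c) = flatten_index sh r.+1 c.
Proof.
move=> ltr; rewrite /flatten_index (take_nth 0) ?size_map // sumn_rcons.
by rewrite nth_shape addnA.
Qed.

Lemma nth_flatten_cyclic r c : r < size ss ->
  c < size (block r) + size (block (next r)) ->
  nth x0 L (flatten_index sh r c %% N) = nth x0 (block r ++ block (next r)) c.
Proof.
move=> ltr ltc; rewrite nth_cat; case: ltnP => [in_r|past_r].
  by rewrite modn_small ?nth_flatten_index ?flatten_index_ltn.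
rewrite -[in LHS](subnKC past_r) flatten_index_next //.
have lt_c' : c - size (block r) < size (block (next r)) by lia.
have [lt_next|wrap] := ltnP r.+1 (size ss).
  rewrite modn_small // in lt_c' *.
  by rewrite modn_small ?nth_flatten_index ?flatten_index_ltn.
have last_r : r.+1 = size ss by lia.
rewrite last_r modnn in lt_c' *.
rewrite {1}/flatten_index take_oversize ?size_map // -size_flatten modnDl.
set c' := c - _ in lt_c' *.
have {1}-> : c' = flatten_index sh 0 c' by rewrite /flatten_index take0.
by rewrite modn_small ?nth_flatten_index ?flatten_index_ltn.
Qed.

Variable l : nat.
Hypothesis long_blocks : {in ss, forall s, l.-1 <= size s}.

Lemma flatten_cyclic_window p : p < N -> exists2 r, r < size ss &
  (forall j, j < l -> nth x0 L ((p + j) %% N) \in block r) \/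
  (forall j, j < l -> nth x0 L ((p + j) %% N) \in
     drop (size (block r) - l.-1) (block r) ++ take l.-1 (block (next r))).
Proof.
move=> ltp; have ltp' : p < sumn sh by rewrite -size_flatten.
set r := reshape_index sh p; set k := reshape_offset sh p.
have ltr : r < size ss by rewrite -(size_map size); exact: reshape_indexP.
have ltk : k < size (block r) by rewrite -nth_shape; exact: reshape_offsetP.
have next_long : l.-1 <= size (block (next r)).
  by apply/long_blocks/mem_nth; rewrite ltn_mod; lia.
have window_nth j : j < l ->
    nth x0 L ((p + j) %% N) = nth x0 (block r ++ block (next r)) (k + j).
  move=> ltj; rewrite -nth_flatten_cyclic //; last by lia.
  by rewrite -(reshape_indexK sh p) /flatten_index addnA.
exists r => //.
have [fits|crosses] := leqP (k + l) (size (block r)); [left|right] => j ltj.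
  by rewrite window_nth // nth_cat ifT ?mem_nth //; lia.
by rewrite window_nth //; apply: mem_nth_cat_drop_take; lia.
Qed.

End CyclicFlatten.

Section BufferedEnum.
Variables (X : finType) (S SL SR : {set X}).

Definition buffered_enum : seq X :=
  enum (SL :\: SR) ++ enum (S :\: (SL :|: SR)) ++ enum (SL :&: SR) ++ enum (SR :\: SL).

Hypotheses (subL : SL \subset S) (subR : SR \subset S).

Lemma mem_buffered_enum : buffered_enum =i S.
Proof.
move=> x; rewrite !mem_cat !mem_enum !inE.
case xL: (x \in SL); case xR: (x \in SR);
  by rewrite ?(subsetP subL x xL) ?(subsetP subR x xR) ?orbF.
Qed.

Lemma buffered_enum_uniq : uniq buffered_enum.
Proof.
rewrite !cat_uniq !enum_uniq !has_cat /= !negb_or andbT.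
by repeat (apply/andP; split); apply/hasPn => x; rewrite !mem_enum !inE;
  case: (x \in SL); case: (x \in SR); case: (x \in S).
Qed.

Lemma size_buffered_enum : size buffered_enum = #|S|.
Proof.
rewrite -(card_uniqP buffered_enum_uniq); apply: eq_card; exact: mem_buffered_enum.
Qed.

Lemma take_buffered_enum : [disjoint SL & SR] \/ SL :|: SR = S ->
  {subset take #|SL| buffered_enum <= SL}.
Proof.
rewrite /buffered_enum; case=> [disjLR|coverLR] x.
  rewrite take_size_cat; last by rewrite -cardE (setDidPl disjLR).
  by rewrite mem_enum inE => /andP[].
have -> : S :\: (SL :|: SR) = set0 by apply/eqP; rewrite setD_eq0 coverLR.
rewrite enum_set0 cat0s catA take_size_cat; last first.
  by rewrite size_cat -!cardE addnC cardsID.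
by rewrite mem_cat !mem_enum !inE => /orP[] /andP[].
Qed.

Lemma drop_buffered_enum : {subset drop (#|S| - #|SR|) buffered_enum <= SR}.
Proof.
move=> x; rewrite /buffered_enum catA drop_size_cat; last first.
  have := size_buffered_enum; have := cardsID SL SR.
  by rewrite /buffered_enum !size_cat -!cardE setIC; lia.
by rewrite mem_cat !mem_enum !inE => /orP[] /andP[].
Qed.

End BufferedEnum.

Lemma buffered_nondeficient (X : finType) l (S SL SR : {set X}) :
  buffered l S SL SR -> nondeficient l S ->
  [/\ #|SL| = l.-1, #|SR| = l.-1 & [disjoint SL & SR] \/ SL :|: SR = S].
Proof.
case=> _ _ _ overlapping separated /negP; rewrite -ltnNge => big.
have [small|large] := leqP (#|S| + 2) (2 * l).
  by have [cardL cardR coverLR] := overlapping ltac:(lia) small; split; try lia; right.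
by have [cardL cardR disjLR] := separated ltac:(lia); split; try lia; left.
Qed.

Lemma iter_ordS n (i : 'I_n) j : iter j (@ordS n) i = (i + j) %% n :> nat.
Proof.
elim: j => [|j IHj] /=; first by rewrite addn0 modn_small.
by rewrite IHj -addn1 modnDml addn1 addnS.
Qed.

Lemma independentS (X : finType) (B : seq {set X}) (S T : {set X}) :
  S \subset T -> independent B T -> independent B S.
Proof.
move=> subST indepT b b_in; apply: contra (indepT b b_in) => /subset_trans; exact.
Qed.

Section Presequencing.
Variables (X : finType) (B : seq {set X}) (l s : nat) (S SL SR : 'I_s -> {set X}).
Hypotheses (preseq : presequencing B l S SL SR) (nondef : forall i, nondeficient l (S i)).

Definition class_enums := [seq buffered_enum (S i) (SL i) (SR i) | i <- enum 'I_s].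
Definition presequencing_enum := flatten class_enums.

Let buf i : buffered l (S i) (SL i) (SR i). Proof. by case: preseq. Qed.
Let subL i : SL i \subset S i. Proof. by case: (buf i). Qed.
Let subR i : SR i \subset S i. Proof. by case: (buf i). Qed.
Let buffer_shape i := buffered_nondeficient (buf i) (@nondef i).

Lemma size_class_enums : size class_enums = s.
Proof. by rewrite size_map size_enum_ord. Qed.

Lemma nth_class_enums (i : 'I_s) :
  nth [::] class_enums i = buffered_enum (S i) (SL i) (SR i).
Proof. by rewrite (nth_map i) ?size_enum_ord // nth_ord_enum. Qed.

Lemma mem_presequencing_enum x : x \in presequencing_enum.
Proof.
case: preseq => _ _ cover _ _; have /bigcupP[i _ x_in] : x \in \bigcup_i S i.
  by rewrite cover inE.
apply/flattenP; exists (buffered_enum (S i) (SL i) (SR i)).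
  by apply: map_f; rewrite mem_enum.
by rewrite mem_buffered_enum.
Qed.

Lemma presequencing_enum_uniq : uniq presequencing_enum.
Proof.
case: preseq => _ disj _ _ _; apply: flatten_uniq.
  by apply/allP => _ /mapP[i _ ->]; exact: buffered_enum_uniq.
rewrite /class_enums pairwise_map; have := enum_uniq 'I_s; rewrite uniq_pairwise.
apply: sub_pairwise => i j /= neq_ij; apply/hasPn => x.
rewrite mem_buffered_enum // => x_in; apply/negP.
by rewrite -[mem _ x]/(x \in _) mem_buffered_enum // (disjointFr (disj i j neq_ij)).
Qed.

Lemma size_presequencing_enum : size presequencing_enum = #|X|.
Proof.
rewrite -(card_uniqP presequencing_enum_uniq); apply: eq_card => x.
by rewrite mem_presequencing_enum.
Qed.

Lemma nth_presequencing_enum_bij x0 :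
  bijective (fun j : 'I_#|X| => nth x0 presequencing_enum j).
Proof.
apply: inj_card_bij; last by rewrite card_ord.
move=> i j /eqP.
rewrite nth_uniq ?size_presequencing_enum ?presequencing_enum_uniq //.
by move/eqP/val_inj.
Qed.

Lemma window_independent x0 p (W : {set X}) : p < #|X| ->
  (forall x, x \in W -> exists2 j, j < l &
     x = nth x0 presequencing_enum ((p + j) %% #|X|)) ->
  independent B W.
Proof.
case: preseq => _ _ _ indep indepLR ltp in_window.
have long : {in class_enums, forall c, l.-1 <= size c}.
  move=> _ /mapP[i _ ->]; have [<- _ _] := buffer_shape i.
  by rewrite size_buffered_enum // subset_leq_card.
have := flatten_cyclic_window x0 long (p := p).
rewrite -/presequencing_enum size_presequencing_enum size_class_enums.
case=> // r ltr; pose i := Ordinal ltr.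
rewrite -[r]/(val i) -[r.+1 %% s]/(val (ordS i)) !nth_class_enums.
case=> in_block.
  apply: independentS (indep i); apply/subsetP => _ /in_window[j ltj ->].
  by rewrite -(mem_buffered_enum (subL i) (subR i)) in_block.
apply: independentS (indepLR i); apply/subsetP => _ /in_window[j ltj ->].
have [cardL _ buffersL] := buffer_shape (ordS i); have [_ cardR _] := buffer_shape i.
move: (in_block j ltj); rewrite mem_cat size_buffered_enum // inE -{1}cardR -cardL.
by case/orP => [/drop_buffered_enum -> | /take_buffered_enum -> //]; rewrite ?orbT.
Qed.

End Presequencing.

Theorem lemma5 (X : finType) (n k t lam l : nat) (B : seq {set X}) :
  0 < l ->
  partial_system n k t lam B ->
  has_nondeficient_presequencing B l ->
  exists phi : 'I_n -> X, bijective phi /\ cyclically_good B l phi.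
Proof.
move=> _ [[cardX k_le_n t_lt_k t_ge2 _] _] [s [S [SL [SR [preseq nondef]]]]].
subst n; have : 0 < #|X| by lia.
case/card_gt0P=> x0 _.
exists (fun j => nth x0 (presequencing_enum S SL SR) j).
split; first exact: nth_presequencing_enum_bij preseq x0.
move=> W cardW [p defW]; apply: (window_independent preseq nondef (ltn_ord p)).
move=> x; rewrite defW => /imsetP[j _ ->].
by exists j; rewrite ?iter_ordS // -cardW.
Qed.
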